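(* Let $k$ and $c$ be positive integers, let $G$ be a finite simple graph of order $n$, and let $L \subseteq V(G)$ be fixed. Let $C_{1},\dots,C_{k}$ be pairwise vertex-disjoint $c$-chorded cycles of $G$, each with a fixed orientation, such that $C^{*} := \bigcup_{p=1}^{k} C_{p}$ is not a spanning subgraph of $G$, and such that among all choices of $k$ pairwise vertex-disjoint $c$-chorded cycles in $G$, (A1) $|V(C^{*}) \cap L|$ is as large as possible, and (A2) subject to (A1), $|V(C^{*})|$ is as large as possible. Let $H^{*} = G - V(C^{*})$ and let $H$ be a component of $H^{*}$. Let $C = C_{p}$ for some $1 \le p \le k$, let $v \in N_{C}(H)$ and $x \in V(H)$. Then (i) $v^{+}x \notin E(G)$, and (ii) $d_{H^{*}\cup C}(v^{+}) + d_{H^{*}\cup C}(x) \le |V(H^{*}) \cup V(C)| - 1$.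
   Context: A cycle $C$ in $G$ is a $c$-chorded cycle if $|E(G[V(C)]) \setminus E(C)| \ge c$, where $G[X]$ is the induced subgraph on $X$. For $v \in V(G)$ and $X \subseteq V(G)$, $N_{X}(v) = N_{G}(v) \cap X$ and $d_{X}(v) = |N_{X}(v)|$; for a subgraph $F$ we write $N_{F}$, $d_{F}$ for $N_{V(F)}$, $d_{V(F)}$, and $H^{*}\cup C$ denotes the vertex set $V(H^{*}) \cup V(C)$. For $V' \subseteq V(G)$, $N_{X}(V') = \bigcup_{u \in V'} N_{X}(u)$. For a vertex $v$ on an oriented cycle $C$, $v^{+}$ denotes the successor of $v$ along the orientation of $C$. *)

(* A finite simple graph is a symmetric irreflexive
   relation e on a finType T (vertex set = T). *)
From mathcomp Require Import all_boot.
Set Implicit Arguments. Unset Strict Implicit. Unset Printing Implicit Defensive.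

Section Graphs.
Variable T : finType.
Variable e : rel T.

Definition cverts (s : seq T) : {set T} := [set x | x \in s].

(* an oriented cycle: distinct vertices, length >= 3, consecutive
   vertices (cyclically) adjacent; orientation = order of the sequence,
   successor v^+ = next s v *)
Definition is_cycle (s : seq T) : bool := [&& uniq s, 2 < size s & cycle e s].

Definition induced_edges (X : {set T}) : {set {set T}} :=
  [set [set u; v] | u in X, v in X & e u v].

Definition cycle_edges (s : seq T) : {set {set T}} :=
  [set [set u; next s u] | u in cverts s].

Definition chorded_cycle (c : nat) (s : seq T) : bool :=
  is_cycle s && (c <= #|induced_edges (cverts s) :\: cycle_edges s|).

Definition chorded_family (c k : nat) (C : 'I_k -> seq T) : Prop :=
  (forall p, chorded_cycle c (C p)) /\
  (forall p q : 'I_k, p != q -> [disjoint cverts (C p) & cverts (C q)]).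

Definition union_verts (k : nat) (C : 'I_k -> seq T) : {set T} :=
  \bigcup_(p < k) cverts (C p).

Definition nbhd (X : {set T}) (v : T) : {set T} := [set u in X | e v u].
Definition deg (X : {set T}) (v : T) : nat := #|nbhd X v|.
Definition nbhd_set (X V' : {set T}) : {set T} := \bigcup_(u in V') nbhd X u.

Definition component (X : {set T}) (h0 : T) : {set T} :=
  [set y in X | connect (fun a b => [&& e a b, a \in X & b \in X]) h0 y].

End Graphs.

(* Both claims rest on the maximality of the family: a c-chorded cycle whose
   vertex set strictly extends V(C) by vertices of H* could replace C, which
   enlarges V(C* ) without losing vertices of L.
   (i) If v+ were adjacent to x, a path of H from a neighbour u of v to x could
   be inserted between v and v+: every chord of C survives and v v+ becomes one.
   (ii) In H*, the neighbours of v+ avoid H by (i), while those of x lie in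
   H - x.  On C, w |-> w+ maps N_C(x) into the non-neighbours of v+: if
   w+ ~ v+, the cycle v+ ..C.. w x ..H.. u v ..C backwards.. w+ v+ loses the
   chord v+ w+ but gains the chord w w+, a contradiction again.  Adding up the
   three bounds gives (ii). *)

From mathcomp Require Import all_boot zify.
Set Implicit Arguments. Unset Strict Implicit. Unset Printing Implicit Defensive.

Section CycleArcs.
Variables (T : eqType) (s : seq T).
Hypothesis us : uniq s.

Lemma fcycle_rot i a t : rot i s = a :: t -> fcycle (next s) (a :: t).
Proof.
move=> rot_s; rewrite -rot_s.
by apply: sub_cycle (cycle_next (etrans (rot_uniq i s) us)) => y z /=; rewrite next_rot.
Qed.

Lemma next_inj : injective (next s).
Proof. exact: can_inj (prev_next us). Qed.

Lemma cycle_cut v : v \in s ->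
  exists i P, [/\ rot i s = next s v :: P, fpath (next s) (next s v) P
                & last (next s v) P = v].
Proof.
rewrite -mem_next => /rot_to [i P rot_s]; exists i, P; split => //.
  by have /= := fcycle_rot rot_s; rewrite rcons_path => /andP [].
by have /= := fcycle_rot rot_s; rewrite rcons_path => /andP [_ /eqP /next_inj].
Qed.

Lemma cycle_cut2 v w : v \in s -> w \in s -> v != w ->
  exists i P1 P2, [/\ rot i s = next s v :: P1 ++ next s w :: P2,
    fpath (next s) (next s v) P1, last (next s v) P1 = w,
    fpath (next s) (next s w) P2 & last (next s w) P2 = v].
Proof.
rewrite -(mem_next s v) -(mem_next s w) -(inj_eq next_inj) => vs ws vw.
case: (rot_to_arc us vs ws vw) => i P1 P2 _ _ rot_s; exists i, P1, P2.
have /= := fcycle_rot rot_s; rewrite rcons_cat cat_path /= rcons_path.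
by case/and4P=> P1p /eqP /next_inj P1w P2p /eqP /next_inj P2v.
Qed.

End CycleArcs.

Lemma path_rev_cons (T : Type) (R : rel T) y a t : symmetric R ->
  path R y (rev (a :: t)) = R y (last a t) && path R a t.
Proof.
move=> symR; rewrite lastI rev_rcons /= rev_path; congr (_ && _).
by apply: eq_path => z z'; rewrite symR.
Qed.

Lemma set2_neq (T : finType) (A : {pred T}) (X : {set T}) a b z :
  a \in A -> b \in A -> z \in X -> z \notin A -> [set a; b] != X.
Proof.
move=> aA bA zX; apply: contra => /eqP abX.
by move: zX; rewrite -abX !inE => /orP [] /eqP ->.
Qed.

Lemma card_setD_swap (T : finType) (I E : {set T}) (g f : T) :
  g \in I -> g \in E -> g != f -> #|I :\: E| <= #|I :\: (E :\ g :|: [set f])|.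
Proof.
move=> gI gE gf; apply: leq_trans (_ : #|g |: ((I :\: E) :\ f)| <= _).
  by rewrite cardsU1 (cardsD1 f (I :\: E)) leq_add2r !inE gE !andbF leq_b1.
apply: subset_leq_card; apply/subsetP => z.
rewrite !inE => /orP [/eqP -> | /and3P [zf zE zI]]; first by rewrite eqxx gI (negbTE gf).
by rewrite (negbTE zE) (negbTE zf) andbF zI.
Qed.

Section Graph.
Variables (T : finType) (e : rel T).

Definition chords (s : seq T) : {set {set T}} :=
  induced_edges e (cverts s) :\: cycle_edges s.

(* The edges a rerouted cycle may use: inside V, only those listed in F. *)
Definition edge_off (V : {set T}) (F : {set {set T}}) : rel T :=
  fun a b => e a b && [|| a \notin V, b \notin V | [set a; b] \in F].

Lemma edge_off_sym (V : {set T}) (F : {set {set T}}) :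
  symmetric e -> symmetric (edge_off V F).
Proof. by move=> se a b; rewrite /edge_off se setUC orbCA. Qed.

Lemma edge_offl (V : {set T}) (F : {set {set T}}) a b :
  e a b -> a \notin V -> edge_off V F a b.
Proof. by rewrite /edge_off => -> ->. Qed.

Lemma edge_offr (V : {set T}) (F : {set {set T}}) a b :
  e a b -> b \notin V -> edge_off V F a b.
Proof. by rewrite /edge_off => -> ->; rewrite orbT. Qed.

Lemma path_edge_off_out (V : {set T}) (F : {set {set T}}) u q :
  {in u :: q, forall z, z \notin V} -> path e u q -> path (edge_off V F) u q.
Proof.
move=> qV; apply: (sub_in_path (P := mem (u :: q))); last exact/allP.
by move=> a b aq _ ab; apply: edge_offl; rewrite ?qV.
Qed.

Lemma chords_extend (V : {set T}) (F : {set {set T}}) (s : seq T) :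
  cycle (edge_off V F) s -> V \subset cverts s ->
  induced_edges e V :\: F \subset chords s.
Proof.
move=> cyc_s Vs; apply/subsetP => E /setDP [/imset2P [a b aV]].
rewrite inE => /andP [bV eab] -> abF; rewrite inE; apply/andP; split.
  apply/imsetP => -[y]; rewrite inE => ys yy'.
  have /andP [_] := next_cycle cyc_s ys.
  have abV z : z \in [set a; b] -> z \in V by rewrite !inE => /orP [] /eqP ->.
  have yV : y \in V by apply: abV; rewrite yy' set21.
  have y'V : next s y \in V by apply: abV; rewrite yy' set22.
  by rewrite yV y'V -yy' (negbTE abF).
by apply/imset2P; exists a b; [exact: (subsetP Vs) | rewrite inE (subsetP Vs) |].
Qed.

Lemma next_cycle_edge (s : seq T) (a : T) :
  a \in s -> [set a; next s a] \in cycle_edges s.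
Proof. by move=> ais; apply/imsetP; exists a; rewrite ?inE. Qed.

Lemma fpath_edge_off (s : seq T) (V : {set T}) (F : {set {set T}}) a t :
  cycle e s -> {subset a :: t <= s} ->
  {in a :: t, forall y, next s y \in a :: t -> [set y; next s y] \in F} ->
  fpath (next s) a t -> path (edge_off V F) a t.
Proof.
move=> cyc_s ts keepF; apply: (sub_in_path (P := mem (a :: t))); last exact/allP.
move=> y z yt zt /eqP zE; rewrite -zE in zt *; rewrite /edge_off next_cycle ?ts //=.
by rewrite keepF ?orbT.
Qed.

Lemma component_path X h0 y z : symmetric e ->
    y \in component e X h0 -> z \in component e X h0 ->
  exists q, [/\ path e y q, last y q = z, uniq (y :: q) & {subset y :: q <= X}].
Proof.
move=> se; rewrite !inE => /andP [yX h0y] /andP [zX h0z].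
set E := (fun a b => _) in h0y h0z.
have symE : symmetric E by move=> a b; rewrite /E se; case: (a \in X); case: (b \in X).
have /connectP [r Er ->] : connect E y z.
  by apply: connect_trans h0z; rewrite (sym_connect_sym symE).
case: (shortenP Er) => q Eq uq _; exists q; split => //.
  by apply: sub_path Eq => a b /and3P [].
elim: q y yX Eq {uq h0y Er} => [|a q IHq] y yX.
  by move=> _ w; rewrite inE => /eqP ->.
rewrite /= => /andP [/and3P [_ _ aX] Eq] w; rewrite inE.
by case/orP => [/eqP -> // | /IHq]; apply.
Qed.

Lemma component_nbhd X h0 x :
  x \in component e X h0 -> nbhd e X x \subset component e X h0.
Proof.
rewrite !inE => /andP [xX h0x]; apply/subsetP => z; rewrite !inE => /andP [zX xz].
by rewrite zX (connect_trans h0x) // connect1 //= xz xX zX.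
Qed.

Lemma nbhd_sub (X : {set T}) v : nbhd e X v \subset X.
Proof. by apply/subsetP => z; rewrite inE => /andP []. Qed.

Lemma deg_component X h0 x : irreflexive e ->
  x \in component e X h0 -> deg e X x <= #|component e X h0 :\ x|.
Proof.
move=> irr xH; apply/subset_leq_card/subsetP => z zN.
rewrite in_setD1 (subsetP (component_nbhd xH)) // andbT.
by apply: contraTneq zN => ->; rewrite inE irr andbF.
Qed.

Lemma deg_setU (A B : {set T}) v :
  [disjoint A & B] -> deg e (A :|: B) v = deg e A v + deg e B v.
Proof.
move=> AB; rewrite /deg; have -> : nbhd e (A :|: B) v = nbhd e A v :|: nbhd e B v.
  by apply/setP => z; rewrite !inE andb_orl.
by apply/eqP; rewrite (leq_card_setU _ _).2 (disjointW (nbhd_sub _ _) (nbhd_sub _ _)).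
Qed.

End Graph.

Lemma mem_union_verts (T : finType) (k : nat) (C : 'I_k -> seq T) p z :
  z \in C p -> z \in union_verts C.
Proof. by move=> zC; apply/bigcupP; exists p; rewrite ?inE. Qed.

Section MaximalFamily.
Variables (T : finType) (e : rel T) (k c : nat) (L : {set T}) (C : 'I_k -> seq T).
Hypothesis se : symmetric e.
Hypothesis Cfam : chorded_family e c C.
Hypothesis Cmax : forall D : 'I_k -> seq T, chorded_family e c D ->
  #|union_verts D :&: L| <= #|union_verts C :&: L| /\
  (#|union_verts D :&: L| = #|union_verts C :&: L| ->
     #|union_verts D| <= #|union_verts C|).

Local Notation U := (union_verts C).

Lemma outside_notin_cycle p z : z \in ~: U -> z \notin C p.
Proof. by rewrite inE; apply: contra; apply: mem_union_verts. Qed.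

Lemma chorded_family_replace p s :
  chorded_cycle e c s -> cverts s \subset cverts (C p) :|: ~: U ->
  chorded_family e c (fun q => if q == p then s else C q).
Proof.
move=> chs sCU; have [chC disjC] := Cfam.
have disj_s r : r != p -> [disjoint cverts s & cverts (C r)].
  move=> rp; rewrite -setI_eq0; apply/eqP/setP => z; rewrite !inE.
  apply/negbTE/andP => -[zs zr]; have := subsetP sCU z; rewrite !inE zs.
  case/(_ isT)/orP => [zp | /negP []]; last exact: mem_union_verts zr.
  by have := disjC p r; rewrite eq_sym rp => /(_ isT)/pred0P/(_ z); rewrite /= !inE zp zr.
split=> [q | q r qr]; first by case: eqP.
case: (eqVneq q p) => [qp | qp]; case: (eqVneq r p) => [rp | rp].
- by rewrite qp rp eqxx in qr.
- exact: disj_s.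
- by rewrite disjoint_sym; apply: disj_s.
- exact: disjC.
Qed.

Lemma union_verts_replace p s :
  cverts (C p) \proper cverts s -> cverts s \subset cverts (C p) :|: ~: U ->
  U \proper union_verts (fun q => if q == p then s else C q).
Proof.
case/properP=> ps [y ys yNp] sCU; apply/properP; split.
  apply/subsetP => z /bigcupP [q _ zq]; apply/bigcupP; exists q => //.
  by case: eqP => [qp | //]; apply: (subsetP ps); rewrite -qp.
exists y; first by apply/bigcupP; exists p; rewrite ?eqxx.
by have := subsetP sCU y ys; rewrite inE (negbTE yNp) inE.
Qed.

Lemma no_chorded_extension p s :
  chorded_cycle e c s -> cverts (C p) \proper cverts s ->
  cverts s \subset cverts (C p) :|: ~: U -> False.
Proof.
move=> chs ps sCU; have UD := union_verts_replace ps sCU.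
have [leL maxD] := Cmax (chorded_family_replace chs sCU).
have geL := subset_leq_card (setSI L (proper_sub UD)).
have := proper_card UD; have := maxD; lia.
Qed.

Lemma no_chorded_insertion p (Q s : seq T) (F : {set {set T}}) :
  Q != [::] -> uniq Q -> {subset Q <= ~: U} -> perm_eq s (C p ++ Q) ->
  c <= #|induced_edges e (cverts (C p)) :\: F| ->
  cycle (edge_off e (cverts (C p)) F) s -> False.
Proof.
move=> Q0 uQ QU sCQ cF cyc_s; have [chC _] := Cfam.
have /andP [/and3P [uC sizeC _] _] := chC p.
have [y yQ] : exists y, y \in Q.
  by case: Q Q0 {uQ QU sCQ} => // y Q' _; exists y; exact: mem_head.
have mem_s z : (z \in s) = (z \in C p) || (z \in Q) by rewrite (perm_mem sCQ) mem_cat.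
have Cs : cverts (C p) \subset cverts s by apply/subsetP => z; rewrite !inE mem_s => ->.
apply: (@no_chorded_extension p s).
- apply/andP; split; first (apply/and3P; split).
  + rewrite (perm_uniq sCQ) cat_uniq uC uQ andbT /=.
    by apply/hasPn => z /QU; apply: outside_notin_cycle.
  + by rewrite (perm_size sCQ) size_cat (leq_trans sizeC) ?leq_addr.
  + by apply: sub_cycle cyc_s => a b /andP [].
  + by apply: leq_trans cF _; apply: subset_leq_card; apply: chords_extend cyc_s Cs.
- apply/properP; split => //; exists y; rewrite inE ?mem_s ?yQ ?orbT //.
  exact: outside_notin_cycle (QU y yQ).
- apply/subsetP => z; rewrite !inE mem_s => /orP [-> // | /QU].
  by rewrite inE => ->; rewrite orbT.
Qed.

Lemma next_nonadj_path_end p v u (q : seq T) :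
  v \in C p -> e u v -> path e u q -> uniq (u :: q) -> {subset u :: q <= ~: U} ->
  ~~ e (next (C p) v) (last u q).
Proof.
move=> vC uv uq uniq_uq uqU; apply/negP => v'y.
have [chC _] := Cfam; have /andP [/and3P [uC _ cycC] cC] := chC p.
have uqV z : z \in u :: q -> z \notin cverts (C p).
  by move=> /uqU zU; rewrite inE outside_notin_cycle.
have [i [P [rot_C fwdP lastP]]] := cycle_cut uC vC.
set v' := next (C p) v in v'y rot_C fwdP lastP.
apply: (@no_chorded_insertion p (u :: q) (v' :: P ++ u :: q) (cycle_edges (C p))) => //.
  by rewrite -cat_cons -rot_C perm_cat2r perm_rot.
rewrite /= rcons_cat cat_path lastP /= rcons_path; apply/and4P; split.
- apply: fpath_edge_off fwdP => // [z | z zP _]; first by rewrite -rot_C mem_rot.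
  by apply: next_cycle_edge; rewrite -(mem_rot i) rot_C.
- by apply: edge_offr; rewrite 1?se ?uqV ?mem_head.
- exact: path_edge_off_out uqV uq.
- by apply: edge_offl; rewrite 1?se ?uqV ?mem_last.
Qed.

Lemma next_nonadj_next p v w x (q : seq T) :
  v \in C p -> w \in C p -> v != w -> w != next (C p) v ->
  e x w -> path e x q -> e (last x q) v -> uniq (x :: q) -> {subset x :: q <= ~: U} ->
  ~~ e (next (C p) v) (next (C p) w).
Proof.
move=> vC wC vw wv' xw xq yv uniq_xq xqU; apply/negP => v'w'.
have [chC _] := Cfam; have /andP [/and3P [uC _ cycC] cC] := chC p.
have xqV z : z \in x :: q -> z \notin cverts (C p).
  by move=> /xqU zU; rewrite inE outside_notin_cycle.
have [i [P1 [P2 [rot_C fwd1 last1 fwd2 last2]]]] := cycle_cut2 uC vC wC vw.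
set v' := next (C p) v in wv' v'w' rot_C fwd1 last1 last2.
set w' := next (C p) w in v'w' rot_C fwd2 last2.
have memC z : (z \in C p) = (z \in v' :: P1) || (z \in w' :: P2).
  by rewrite -(mem_rot i) rot_C -cat_cons mem_cat.
have disjP : {in w' :: P2, forall z, z \notin v' :: P1}.
  apply/hasPn; have := rot_uniq i (C p).
  by rewrite uC rot_C -cat_cons cat_uniq => /and3P [].
have wP1 : w \in v' :: P1 by rewrite -last1 mem_last.
set g := [set w; w']; set f := [set v'; w'].
set F := cycle_edges (C p) :\ g :|: [set f].
have keepF (A : seq T) z : {subset A <= C p} -> z \in g -> z \notin A ->
    {in A, forall y, next (C p) y \in A -> [set y; next (C p) y] \in F}.
  move=> AinC zg zA y yA y'A; rewrite !inE next_cycle_edge ?AinC // andbT.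
  by rewrite (set2_neq yA y'A zg zA).
(* The cycle v+ ..C.. w x ..q.. v ..C backwards.. w+ trades w w+ for v+ w+. *)
apply: (@no_chorded_insertion p (x :: q) (v' :: P1 ++ x :: q ++ rev (w' :: P2)) F) => //.
- rewrite -cat_cons; apply: (@perm_trans _ (rot i (C p) ++ x :: q)); last first.
    by rewrite perm_cat2r perm_rot.
  rewrite rot_C -(cat_cons v' P1) -catA perm_cat2l -(cat_cons x q).
  by rewrite perm_catC perm_cat2r perm_rev.
- apply: leq_trans cC (card_setD_swap _ _ _).
  + by apply/imset2P; exists w w'; rewrite // !inE /w' ?mem_next ?wC ?next_cycle.
  + exact: next_cycle_edge.
  + apply: contraNneq wv' => /setP /(_ v'); rewrite !inE eqxx /=.
    case/orP => /eqP v'E; first by rewrite v'E.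
    by have := disjP w' (mem_head _ _); rewrite -v'E mem_head.
have symR := edge_off_sym (cverts (C p)) F se.
rewrite /= rcons_cat cat_path last1 /= rcons_cat cat_path.
rewrite -rev_cons path_rev_cons //= last2.
have sub1 : {subset v' :: P1 <= C p} by move=> z zP; rewrite memC zP.
have sub2 : {subset w' :: P2 <= C p} by move=> z zP; rewrite memC zP orbT.
have wP2 : w \notin w' :: P2 by apply/negP => /disjP; rewrite wP1.
apply/and5P; split.
- have w'P1 := disjP _ (mem_head w' P2).
  exact: fpath_edge_off cycC sub1 (keepF _ _ sub1 (set22 w w') w'P1) fwd1.
- by apply: edge_offr; rewrite ?xqV ?mem_head 1?se.
- exact: path_edge_off_out xqV xq.
- by apply: edge_offl; rewrite ?xqV ?mem_last.
- apply/andP; split; first by rewrite /edge_off v'w' /F !inE eqxx !orbT.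
  exact: fpath_edge_off cycC sub2 (keepF _ _ sub2 (set21 w w') wP2) fwd2.
Qed.

Variable h0 : T.
Local Notation H := (component e (~: U) h0).

Lemma next_nonadj_component p v y :
  v \in nbhd_set e (cverts (C p)) H -> y \in H -> ~~ e (next (C p) v) y.
Proof.
case/bigcupP => u uH /setIdP [vC uv] yH; rewrite inE in vC.
have [q [uq <- uniq_q qU]] := component_path se uH yH.
exact: next_nonadj_path_end uv uq uniq_q qU.
Qed.

Lemma deg_outside_next p v :
  v \in nbhd_set e (cverts (C p)) H -> deg e (~: U) (next (C p) v) <= #|~: U :\: H|.
Proof.
move=> vN; apply/subset_leq_card/subsetP => z /setIdP [zU v'z].
by rewrite in_setD zU andbT; apply: contraL v'z; apply: next_nonadj_component.
Qed.

Lemma deg_cycle_next p v x : irreflexive e ->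
  v \in nbhd_set e (cverts (C p)) H -> x \in H ->
  deg e (cverts (C p)) x + deg e (cverts (C p)) (next (C p) v) <= #|cverts (C p)|.
Proof.
move=> irr vN xH; have [chC _] := Cfam; have /andP [/and3P [uC _ _] _] := chC p.
set V := cverts (C p); set v' := next (C p) v.
have [u uH /setIdP [vC uv]] : exists2 u, u \in H & v \in nbhd e V u by apply/bigcupP.
rewrite inE in vC.
have shift : next (C p) @: nbhd e V x \subset V :\: nbhd e V v'.
  apply/subsetP => _ /imsetP [w /[!inE] /andP [wC xw] ->].
  rewrite mem_next wC andbT /=; apply/negP => v'w'.
  have [wv | wv] := eqVneq w v; first by move: v'w'; rewrite wv irr.
  have [wv' | wv'] := eqVneq w v'.
    by have := next_nonadj_component vN xH; rewrite -/v' se -wv' xw.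
  have [q [xq lastq uniq_q qU]] := component_path se xH uH.
  have vw : v != w by rewrite eq_sym.
  have yv : e (last x q) v by rewrite lastq.
  by move: v'w'; apply/negP; apply: (next_nonadj_next vC wC vw wv' xw xq yv).
have := subset_leq_card shift; rewrite card_in_imset; last first.
  by move=> ? ? _ _; apply: next_inj.
rewrite cardsDS ?nbhd_sub // /deg; have := subset_leq_card (nbhd_sub e V v'); lia.
Qed.

End MaximalFamily.

Theorem lemma1 (T : finType) (e : rel T) (k c : nat) (L : {set T})
    (C : 'I_k -> seq T) (h0 : T) (p : 'I_k) (v x : T) :
  symmetric e -> irreflexive e -> 0 < k -> 0 < c ->
  chorded_family e c C ->
  union_verts C != [set: T] ->
  (forall D : 'I_k -> seq T, chorded_family e c D ->
     #|union_verts D :&: L| <= #|union_verts C :&: L| /\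
     (#|union_verts D :&: L| = #|union_verts C :&: L| ->
        #|union_verts D| <= #|union_verts C|)) ->
  h0 \in ~: union_verts C ->
  v \in nbhd_set e (cverts (C p)) (component e (~: union_verts C) h0) ->
  x \in component e (~: union_verts C) h0 ->
  ~~ e (next (C p) v) x /\
  deg e (~: union_verts C :|: cverts (C p)) (next (C p) v)
    + deg e (~: union_verts C :|: cverts (C p)) x
  <= #|~: union_verts C :|: cverts (C p)| - 1.
Proof.
move=> se irr _ _ Cfam _ Cmax _ vN xH.
split; first exact: (next_nonadj_component se Cfam Cmax vN xH).
have disjUV : [disjoint ~: union_verts C & cverts (C p)].
  rewrite disjoint_sym disjoints_subset setCK.
  by apply/subsetP => z; rewrite inE; apply: mem_union_verts.
have HU : component e (~: union_verts C) h0 \subset ~: union_verts C.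
  by apply/subsetP => z /setIdP [].
have out_next := deg_outside_next se Cfam Cmax vN; rewrite cardsDS // in out_next.
have in_x := deg_component irr xH; have := cardsD1 x (component e (~: union_verts C) h0).
have on_cycle := deg_cycle_next se Cfam Cmax irr vN xH.
have /eqP := (leq_card_setU (~: union_verts C) (cverts (C p))).2; rewrite disjUV => cardU.
rewrite !deg_setU // cardU xH; have := subset_leq_card HU; lia.
Qed.
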